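(* Let $m,n,r\ge1$ and let $\sigma:I^m\to J^r(\mathbb R^m,\mathbb R^n)$ be a section with $\sigma^{(r-1)}=0$. Then one can write $\sigma=\sum_\beta\sigma_\beta$, the sum ranging over multi-indices $\beta=(\beta_1,\dots,\beta_k)$ with $1\le\beta_j\le m$ and $k=|\beta|\le r$ (up to permutation), for sections $\sigma_\beta:I^m\to J^r(\mathbb R^m,\mathbb R^n)$ such that: each $\sigma_\beta$ is primitive with respect to the constant hyperplane field $\tau_\beta=\ker(dx_{\beta_1}+\dots+dx_{\beta_k})$; each $\sigma_\beta$ depends smoothly on $\sigma$; and if $\sigma=0$ on an open neighborhood of a closed subset $A\subset I^m$, then every $\sigma_\beta=0$ on an open neighborhood of $A$.
   Context: $I=[-1,1]$. $J^r(\mathbb R^m,\mathbb R^n)\cong\mathbb R^m\times(\mathcal P_r)^n$ via Taylor polynomials of degree $\le r$, with linear structure (sum of sections) from $\mathbb R^n$; $\sigma^{(r-1)}$ is the truncation to degree $\le r-1$. A section $\sigma$ is primitive with respect to a hyperplane field $\tau$ if $\sigma^\perp=0$, where $\sigma^\perp(x)$ for $\sigma(x)=j^r(h)(x)$ consists of the $(r-1)$-jet of $h$ at $x$ and the derivatives $\partial_\nu\partial_\alpha h(x)$, $|\alpha|=r-1$, $\nu\in\tau_x$. *)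

From HB Require Import structures.
From mathcomp Require Import all_boot all_order all_algebra.
From mathcomp Require Import reals.
From mathcomp Require Import mpoly.
Set Implicit Arguments. Unset Strict Implicit. Unset Printing Implicit Defensive.
Import Order.TTheory GRing.Theory Num.Theory.
Local Open Scope ring_scope.

Definition point (R : realType) (m : nat) := 'I_m -> R.

Definition in_cube (R : realType) (m : nat) (x : point R m) : Prop :=
  forall i, -1 <= x i <= 1.

Definition cube_open (R : realType) (m : nat) (U : point R m -> Prop) : Prop :=
  (forall x, U x -> in_cube x) /\
  (forall x, U x -> exists2 e : R, 0 < e &
     forall y, in_cube y -> (forall i, `|y i - x i| < e) -> U y).

Definition cube_closed (R : realType) (m : nat) (A : point R m -> Prop) : Prop :=
  (forall x, A x -> in_cube x) /\
  cube_open (fun x => in_cube x /\ ~ A x).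

(* The fibre of J^r(R^m,R^n) over a point x: an n-tuple of Taylor polynomials
   of degree <= r, written in the centered variables z = y - x
   (so the coefficient structure gives d_alpha h(x) = (d_alpha P).@[0]). *)
Definition jet (R : realType) (m n : nat) := 'I_n -> {mpoly R[m]}.

Definition is_rjet (R : realType) (m n r : nat) (J : jet R m n) : Prop :=
  forall j, (msize (J j) <= r.+1)%N.

Definition ptrunc (R : realType) (m k : nat) (p : {mpoly R[m]}) : {mpoly R[m]} :=
  \sum_(mono <- msupp p | (mdeg mono <= k)%N) p@_mono *: 'X_[mono].

Definition jet_trunc (R : realType) (m n k : nat) (J : jet R m n) : jet R m n :=
  fun j => ptrunc k (J j).

Definition dnu_dalpha (R : realType) (m n : nat) (J : jet R m n) (j : 'I_n)
    (nu : point R m) (alpha : 'X_{1..m}) : R :=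
  \sum_(i < m) nu i * ((mderiv i (mderivm alpha (J j))).@[fun _ => 0]).

Definition primitive_jet (R : realType) (m n r : nat) (tau : point R m -> Prop)
    (J : jet R m n) : Prop :=
  jet_trunc r.-1 J = (fun _ => 0) /\
  forall (alpha : 'X_{1..m}) (nu : point R m) (j : 'I_n),
    mdeg alpha = r.-1 -> tau nu -> dnu_dalpha J j nu alpha = 0.

Definition primitive_section (R : realType) (m n r : nat)
    (tau : point R m -> point R m -> Prop) (s : point R m -> jet R m n) : Prop :=
  forall x, in_cube x -> primitive_jet r (tau x) (s x).

(* Multi-indices beta = (beta_1,...,beta_k), 1 <= beta_j <= m, up to permutation,
   encoded by multiplicities b i = #{j | beta_j = i}; k = sum_i b i. *)
Definition mindex (m r : nat) := {ffun 'I_m -> 'I_r.+1}.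

Definition mindex_len (m r : nat) (b : mindex m r) : nat := (\sum_(i < m) b i)%N.

Definition admissible (m r : nat) (b : mindex m r) : bool :=
  (0 < mindex_len b <= r)%N.

Definition tau_beta (R : realType) (m r : nat) (b : mindex m r)
    (x nu : point R m) : Prop :=
  \sum_(i < m) (b i)%:R * nu i = 0.

Definition fib_linear (R : realType) (m n : nat) (L : jet R m n -> jet R m n) : Prop :=
  forall (a : R) (u v : jet R m n) (j : 'I_n),
    L (fun k => a *: u k + v k) j = a *: L u j + L v j.

From HB Require Import structures.
From mathcomp Require Import all_boot all_order all_algebra.
From mathcomp Require Import reals boolp.
From mathcomp Require Import mpoly.
From mathcomp Require Import ring.
Set Implicit Arguments. Unset Strict Implicit. Unset Printing Implicit Defensive.
Import Order.TTheory GRing.Theory Num.Theory.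
Local Open Scope ring_scope.

(* A jet whose (r-1)-jet vanishes is a homogeneous polynomial of degree r in the
   centred variables.  For a multi-index b put l_b = sum_i b_i x_i: the power l_b^r
   is primitive for ker l_b, since d_nu d_alpha l_b^r is proportional to l_b(nu).
   The polarization identity
     r! x_(psi 1) ... x_(psi r) = sum_(S subset {1..r}) (-1)^(r-|S|) (sum_(k in S) x_(psi k))^r
   writes each monomial of degree r as a combination of the l_b^r with |b| <= r.
   Taking for sigma_b(x) the resulting combination of the coefficients of sigma(x),
   times l_b^r, gives fibrewise linear maps with constant coefficients: sigma_b is
   as smooth as sigma and vanishes wherever sigma does. *)

Lemma onto_injectiveb (I : finType) (f : I -> I) :
  [forall k, k \in codom f] = injectiveb f.
Proof.
apply/forallP/injectiveP => [onto_f | /injF_onto //].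
have /image_injP inj_f : #|codom f| == #|I|.
  rewrite eqn_leq (leq_trans (card_size _)) ?size_codom ?card_ord //=.
  by apply/subset_leq_card/subsetP => k _; apply: onto_f.
by move=> x y; apply: inj_f.
Qed.

Section Polarization.
Variables (A : comNzRingType) (I : finType).

Definition alt_sign (phi : {ffun I -> bool}) : A :=
  \prod_k (if phi k then 1 else -1).

Lemma prodr_nat_bool (c : I -> bool) : \prod_k ((c k)%:R : A) = [forall k, c k]%:R.
Proof.
have [/forallP c1 | /forallPn[k ck]] := boolP [forall k, c k].
  by rewrite big1 // => k _; rewrite c1.
by rewrite (bigD1 k) //= (negbTE ck) mul0r.
Qed.

Lemma expr_sum_subset (y : I -> A) (phi : {ffun I -> bool}) :
  (\sum_(k | phi k) y k) ^+ #|I| =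
  \sum_(f : {ffun I -> I}) [forall t, phi (f t)]%:R * \prod_t y (f t).
Proof.
rewrite big_mkcond -[_ ^+ _]prodr_const bigA_distr_bigA /=.
apply: eq_bigr => f _.
rewrite -prodr_nat_bool -big_split /=; apply: eq_bigr => t _.
by case: (phi (f t)); rewrite ?mul1r ?mul0r.
Qed.

Lemma sum_alt_sign_supsets (T : pred I) :
  \sum_phi alt_sign phi * [forall k, T k ==> phi k]%:R = [forall k, T k]%:R.
Proof.
rewrite -prodr_nat_bool.
transitivity (\sum_(phi : {ffun I -> bool})
                \prod_k ((if phi k then 1 else -1 : A) * (T k ==> phi k)%:R)).
  by apply: eq_bigr => phi _; rewrite big_split /= (prodr_nat_bool (fun k => T k ==> phi k)).
rewrite -(bigA_distr_bigA (fun k (c : bool) => (if c then 1 else -1 : A) * (T k ==> c)%:R)).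
apply: eq_bigr => k _; rewrite big_bool /= implybT mul1r.
by case: (T k); rewrite /= ?mulr0 ?addr0 ?mulr1 ?addrN.
Qed.

Lemma sum_alt_sign_image (f : {ffun I -> I}) :
  \sum_phi alt_sign phi * [forall t, phi (f t)]%:R = (injectiveb f)%:R.
Proof.
rewrite -onto_injectiveb -sum_alt_sign_supsets; apply: eq_bigr => phi _.
congr (_ * (nat_of_bool _)%:R); apply/forallP/forallP => [phi_f k | phi_f t].
  by apply/implyP => /codomP[t ->].
by apply: (implyP (phi_f (f t))); apply: codom_f.
Qed.

Lemma polarization (y : I -> A) :
  \sum_phi alt_sign phi * (\sum_(k | phi k) y k) ^+ #|I| = #|I|`!%:R * \prod_k y k.
Proof.
transitivity (\sum_(f : {ffun I -> I})
   (\sum_phi alt_sign phi * [forall t, phi (f t)]%:R) * \prod_t y (f t)).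
  under [RHS]eq_bigr do rewrite mulr_suml.
  rewrite exchange_big; apply: eq_bigr => phi _.
  by rewrite expr_sum_subset mulr_sumr; apply: eq_bigr => f _; rewrite mulrA.
rewrite (eq_bigr (fun f : {ffun I -> I} => (injectiveb f)%:R * \prod_k y k)) => [|f _]; last first.
  rewrite sum_alt_sign_image; have [/injectiveP inj_f|] := boolP (injectiveb f).
    by congr (_ * _); apply/esym/(reindex_inj inj_f).
  by rewrite !mul0r.
rewrite -mulr_suml -(ffactnn #|I|) -card_inj_ffuns -sum1_card natr_sum.
by congr (_ * _); rewrite [RHS]big_mkcond; apply: eq_bigr => f _; rewrite inE; case: injectiveb.
Qed.
End Polarization.
Arguments alt_sign {A I} phi.

Lemma rmorph_alt_sign (A B : comNzRingType) (I : finType) (f : {rmorphism A -> B})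
    (phi : {ffun I -> bool}) :
  f (alt_sign phi) = alt_sign phi :> B.
Proof.
by rewrite rmorph_prod; apply: eq_bigr => k _; case: (phi k); rewrite ?rmorph1 ?rmorphN1.
Qed.

Lemma msize_dhomog (R : nzRingType) (m d : nat) (p : {mpoly R[m]}) :
  p \is d.-homog -> (msize p <= d.+1)%N.
Proof.
by move/dhomogP => p_homog; rewrite msizeE; apply/bigmax_leqP_seq => mono /p_homog ->.
Qed.

Section LinearForms.
Variables (R : comNzRingType) (m r : nat).

Definition mindex_form (b : mindex m r) : {mpoly R[m]} := \sum_i (b i)%:R *: 'X_i.

Lemma mindex_form_dhomog b : mindex_form b \is 1.-homog.
Proof.
apply: rpred_sum => i _; apply/rpredZ; rewrite dhomogX; apply/eqP/mdeg1.
Qed.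

Lemma mderiv_mindex_form b i : mderiv i (mindex_form b) = (b i)%:R.
Proof.
rewrite linear_sum (bigD1 i) //= big1 ?addr0 => [|j ji].
  by rewrite mderivZ mderivX mnm1E eqxx -[X in (X - _)%MM]add0m addmK mpolyX0 scale1r scaler_nat.
by rewrite mderivZ mderivX mnm1E (negbTE ji) scale0r scaler0.
Qed.

Lemma mderiv_mindex_form_pow b k i :
  mderiv i (mindex_form b ^+ k.+1) = ((b i * k.+1)%N%:R : R) *: mindex_form b ^+ k.
Proof.
rewrite scaler_nat -mulr_natl; elim: k => [|k IHk].
  by rewrite expr1 expr0 mderiv_mindex_form muln1 mulr1.
rewrite exprSr mderivM IHk mderiv_mindex_form !natrM exprSr; ring.
Qed.

Lemma dir_deriv_mindex_form_pow b k alpha (nu z : 'I_m -> R) :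
  \sum_i nu i * (mderivm alpha (mindex_form b ^+ k.+1))^`M(i).@[z] =
  (\sum_i (b i)%:R * nu i) * (k.+1%:R * (mderivm alpha (mindex_form b ^+ k)).@[z]).
Proof.
rewrite mulr_suml; apply: eq_bigr => i _.
rewrite -mderivmU1m -mderivmDm addmC mderivmDm mderivmU1m mderiv_mindex_form_pow.
by rewrite mderivmZ mevalZ natrM; ring.
Qed.

Section Multiplicities.
Variables (I : finType) (psi : I -> 'I_m).
Hypothesis card_I : (#|I| <= r)%N.

Definition mindex_of (phi : {ffun I -> bool}) : mindex m r :=
  [ffun i => inord #|[pred k | phi k & psi k == i]|].

Lemma mindex_ofE phi i : mindex_of phi i = #|[pred k | phi k & psi k == i]| :> nat.
Proof. by rewrite ffunE inordK // ltnS (leq_trans (max_card _)). Qed.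

Lemma mindex_form_of phi : mindex_form (mindex_of phi) = \sum_(k | phi k) 'X_(psi k).
Proof.
rewrite (partition_big psi predT) //=; apply: eq_bigr => i _.
rewrite mindex_ofE scaler_nat -sumr_const.
by apply: eq_big => [k | k /andP[_ /eqP ->]]; rewrite ?inE.
Qed.

Lemma mindex_len_of phi : mindex_len (mindex_of phi) = #|[pred k | phi k]|.
Proof.
rewrite /mindex_len -sum1_card (partition_big psi predT) //=.
by apply: eq_bigr => i _; rewrite mindex_ofE -sum1_card.
Qed.
End Multiplicities.

Lemma polarization_mindex_form (I : finType) (psi : I -> 'I_m) : (0 < r)%N -> #|I| = r ->
  \sum_(phi | admissible (mindex_of psi phi))
     alt_sign phi *: mindex_form (mindex_of psi phi) ^+ r =
  r`!%:R *: \prod_k 'X_(psi k).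
Proof.
move=> r_gt0 card_I; have le_card : (#|I| <= r)%N by rewrite card_I.
have := polarization (fun k => 'X_(psi k) : {mpoly R[m]}).
rewrite card_I mulr_natl -scaler_nat => <-.
rewrite [RHS](bigID (fun phi => admissible (mindex_of psi phi))) /=.
rewrite [X in _ = _ + X]big1 ?addr0 => [|phi]; last first.
  rewrite /admissible mindex_len_of // (leq_trans (max_card _) le_card) andbT -eqn0Ngt.
  move=> /eqP/card0_eq phi0; rewrite big_pred0 => [|k]; last exact: phi0.
  by rewrite expr0n gtn_eqF // mulr0.
apply: eq_bigr => phi _.
by rewrite mindex_form_of // -(rmorph_alt_sign (in_alg {mpoly R[m]})) mulr_algl.
Qed.
End LinearForms.
Arguments mindex_form {R m r} b.

Section Waring.
Variables (R : numFieldType) (m r : nat).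

Definition mnm_seq (a : 'X_{1..m}) : seq 'I_m := flatten [seq nseq (a i) i | i <- enum 'I_m].

Lemma size_mnm_seq a : size (mnm_seq a) = mdeg a.
Proof.
rewrite size_flatten /shape -map_comp sumnE big_map big_enum mdegE /=.
by apply: eq_bigr => i _; rewrite size_nseq.
Qed.

Lemma prod_mnm_seq a : \prod_(i <- mnm_seq a) 'X_i = 'X_[a] :> {mpoly R[m]}.
Proof.
rewrite big_flatten big_map big_enum mpolyXE_id /=.
by apply: eq_bigr => i _; rewrite big_nseq iter_mulr_1.
Qed.

(* The coefficient of l_b^r in the polarization identity for the variables of [a],
   divided by r!. *)
Definition polar_weight (a : 'X_{1..m}) (b : mindex m r) : R :=
  r`!%:R^-1 * \sum_(phi | mindex_of r (tnth (in_tuple (mnm_seq a))) phi == b) alt_sign phi.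

Lemma sum_polar_weight a : (0 < r)%N -> mdeg a = r ->
  \sum_(b | admissible b) polar_weight a b *: mindex_form b ^+ r = 'X_[a] :> {mpoly R[m]}.
Proof.
move=> r_gt0 deg_a; set psi := tnth (in_tuple (mnm_seq a)).
have card_I : #|'I_(size (mnm_seq a))| = r by rewrite card_ord size_mnm_seq.
have prod_psi : \prod_k 'X_(psi k) = 'X_[a] :> {mpoly R[m]}.
  by rewrite -prod_mnm_seq [RHS]big_tnth.
have fact_neq0 : (r`!%:R : R) != 0 by rewrite pnatr_eq0 -lt0n fact_gt0.
apply: (scalerI fact_neq0).
rewrite -prod_psi -(polarization_mindex_form R psi r_gt0 card_I) scaler_sumr.
rewrite (partition_big (mindex_of r psi) (@admissible m r)) //=; apply: eq_bigr => b adm_b.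
rewrite /polar_weight scalerA mulrA mulfV // mul1r scaler_suml.
apply: eq_big => [phi | phi /eqP <-] //.
by case: eqP => [->|]; rewrite ?adm_b ?andbF.
Qed.

Definition primitive_part (b : mindex m r) (p : {mpoly R[m]}) : {mpoly R[m]} :=
  (\sum_(a : 'X_{1..m < r.+1}) p@_a * polar_weight a b) *: mindex_form b ^+ r.

Lemma primitive_part_linear b : linear (primitive_part b).
Proof.
move=> c p q; rewrite /primitive_part scalerA -scalerDl mulr_sumr -big_split /=.
by congr (_ *: _); apply: eq_bigr => a _; rewrite mcoeffD mcoeffZ mulrDl -mulrA.
Qed.

Lemma primitive_part0 b : primitive_part b 0 = 0.
Proof. by rewrite /primitive_part big1 ?scale0r // => a _; rewrite mcoeff0 mul0r. Qed.

Lemma primitive_part_dhomog b p : primitive_part b p \is r.-homog.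
Proof. by apply: dhomogZ; have := dhomogMn r (mindex_form_dhomog R b); rewrite mul1n. Qed.

Lemma sum_primitive_part p : (0 < r)%N -> p \is r.-homog ->
  \sum_(b | admissible b) primitive_part b p = p.
Proof.
move=> r_gt0 p_homog; rewrite [RHS](mpolywE (msize_dhomog p_homog)).
under eq_bigr do rewrite /primitive_part scaler_suml.
rewrite exchange_big /=; apply: eq_bigr => a _.
have [deg_a | deg_a] := eqVneq (mdeg a) r.
  rewrite -(sum_polar_weight r_gt0 deg_a) scaler_sumr.
  by apply: eq_bigr => b _; rewrite scalerA.
rewrite (dhomog_nemf_coeff p_homog deg_a) scale0r.
by rewrite big1 // => b _; rewrite mul0r scale0r.
Qed.
End Waring.

Section Jets.
Variables (R : realType) (m : nat).

Lemma mcoeff_ptrunc k (p : {mpoly R[m]}) mono :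
  (ptrunc k p)@_mono = if (mdeg mono <= k)%N then p@_mono else 0.
Proof.
rewrite /ptrunc raddf_sum /= big_mkcond /=.
under eq_bigr => mono' _ do rewrite mcoeffZ mcoeffX.
have [mono_p | mono_p] := boolP (mono \in msupp p); last first.
  rewrite memN_msupp_eq0 // if_same big1_seq // => mono' /andP[_ mono'_p].
  by case: eqP mono'_p => [-> | _]; rewrite ?(negbTE mono_p) ?mulr0 ?if_same.
rewrite (bigD1_seq mono) ?msupp_uniq //= eqxx mulr1 big1 ?addr0 // => mono' neq.
by rewrite (negbTE neq) mulr0 if_same.
Qed.

Lemma ptrunc_dhomog d (p : {mpoly R[m]}) : (0 < d)%N -> p \is d.-homog -> ptrunc d.-1 p = 0.
Proof.
move=> d_gt0 p_homog; apply/mpolyP => mono; rewrite mcoeff_ptrunc mcoeff0.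
case: leqP => // deg_mono; apply: (dhomog_nemf_coeff p_homog).
by apply: contraTneq deg_mono => ->; rewrite -ltnNge ltn_predL.
Qed.

Lemma dhomog_ptrunc d (p : {mpoly R[m]}) :
  (msize p <= d.+1)%N -> ptrunc d.-1 p = 0 -> p \is d.-homog.
Proof.
move=> size_p trunc_p; apply/dhomogP => mono mono_p.
have deg_le : (mdeg mono < d.+1)%N := leq_trans (msize_mdeg_lt mono_p) size_p.
have deg_gt : (d.-1 < mdeg mono)%N.
  have := congr1 (mcoeff mono) trunc_p; rewrite mcoeff_ptrunc mcoeff0.
  by case: leqP => // _ coef0; move: mono_p; rewrite mcoeff_msupp coef0 eqxx.
by apply/eqP; rewrite eqn_leq -ltnS deg_le (leq_trans (leqSpred d) deg_gt).
Qed.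

Lemma primitive_part_primitive n r (b : mindex m r) (J : jet R m n) (x : point R m) :
  (0 < r)%N -> primitive_jet r (tau_beta b x) (fun j => primitive_part b (J j)).
Proof.
case: r b => // r b _; split => [|alpha nu j _ nu_tau].
  by apply/funext => j; rewrite /jet_trunc ptrunc_dhomog ?primitive_part_dhomog.
rewrite /dnu_dalpha /primitive_part.
under eq_bigr do rewrite mderivmZ mderivZ mevalZ mulrCA.
by rewrite -mulr_sumr dir_deriv_mindex_form_pow nu_tau mul0r mulr0.
Qed.
End Jets.

Theorem mainTheorem11 (R : realType) (m n r : nat) :
  (1 <= m)%N -> (1 <= n)%N -> (1 <= r)%N ->
  exists L : mindex m r -> jet R m n -> jet R m n,
    (forall b, fib_linear (L b)) /\
    forall sigma : point R m -> jet R m n,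
      (forall x, in_cube x -> is_rjet r (sigma x)) ->
      (forall x, in_cube x -> jet_trunc r.-1 (sigma x) = (fun _ => 0)) ->
      let sigma_b := fun b x => L b (sigma x) in
      (forall x, in_cube x ->
         sigma x = (fun j => \sum_(b : mindex m r | admissible b) sigma_b b x j)) /\
      (forall b, admissible b ->
         (forall x, in_cube x -> is_rjet r (sigma_b b x)) /\
         primitive_section r (tau_beta b) (sigma_b b)) /\
      (forall A : point R m -> Prop, cube_closed A ->
         (exists U, cube_open U /\ (forall x, A x -> U x) /\
                    (forall x, U x -> sigma x = (fun _ => 0))) ->
         exists V, cube_open V /\ (forall x, A x -> V x) /\
                   (forall b, admissible b -> forall x, V x -> sigma_b b x = (fun _ => 0))).
Proof.
move=> _ _ r_gt0; exists (fun b J j => primitive_part b (J j)).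
split=> [b c u v j | sigma sigma_rjet sigma_trunc sigma_b]; first exact: primitive_part_linear.
have sigma_homog x j : in_cube x -> sigma x j \is r.-homog.
  move=> x_cube; apply: dhomog_ptrunc; first exact: sigma_rjet.
  exact: (congr1 (fun J => J j) (sigma_trunc x x_cube)).
split; [|split].
- by move=> x x_cube; apply/funext => j; rewrite sum_primitive_part ?sigma_homog.
- move=> b _; split=> [x _ j | x _]; last exact: primitive_part_primitive.
  exact/msize_dhomog/primitive_part_dhomog.
- move=> A _ [U [U_open [AU sigma0]]]; exists U; split=> //; split=> // b _ x Ux.
  by apply/funext => j; rewrite /sigma_b sigma0 // primitive_part0.
Qed.
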